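(* Let $T$ be a left-linear term rewriting system, $\mathcal{A}$ a reduction sequence of $T$ and $\psi$ a stepwise-or-normal proof term that denotes $\mathcal{A}$. Then $mind(\psi)=mind(\mathcal{A})$; $\psi$ is convergent if and only if $\mathcal{A}$ is convergent; and in that case $tgt(\psi)=tgt(\mathcal{A})$.
   Context: Setting. $T=(\Sigma,R)$: $\Sigma$ finite; rules $\mu:l\to r$ with $l$ finite, non-variable, linear, variables of $r$ among those of $l$; terms finite or infinite; $d(t,u)=0$ if $t=u$, else $2^{-k}$, $k$ the least depth where they differ. Reduction sequences. A reduction step $a=\langle t,p,\mu,\sigma\rangle$ has $t|_p=\sigma l$, $src(a)=t$, $tgt(a)=t[\sigma r]_p$, depth $|p|$. A reduction sequence is $id_t$ (length $0$, source and target $t$) or $\langle a_\alpha\rangle_{\alpha<\beta}$, $\beta>0$, with $src(a_{\alpha+1})=tgt(a_\alpha)$ for $\alpha+1<\beta$, and for each limit $\beta_0<\beta$: $\lim_{\alpha\to\beta_0}tgt(a_\alpha)$ exists and equals $src(a_{\beta_0})$, and depths of $a_\alpha$ tend to infinity as $\alpha\to\beta_0$ (for every $n$ there is $\beta'<\beta_0$ with depth $>n$ for $\beta'<\alpha<\beta_0$). It is convergent iff it is empty, or $\beta$ is a successor, or $\beta$ is a limit and the limit-existence and depth conditions also hold at $\beta$. Its target (for convergent sequences) is $tgt(a_{\beta'})$ if $\beta=\beta'+1$ and $\lim_{\alpha\to\beta}tgt(a_\alpha)$ if $\beta$ is a limit. $mind(\mathcal{A})$ is $\omega$ for $id_t$,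 otherwise the minimum depth of its steps. Proof terms. $\Sigma^R$ extends $\Sigma$ by a symbol $\mu$ of arity $n$ per rule ($n$ distinct variables of $l$). A one-step is a closed term over $\Sigma^R$ with a single rule-symbol occurrence $\mu(t_1,..,t_n)$ at position $p$; source/target replace it by $l[t_1,..,t_n]$ / $r[t_1,..,t_n]$; $mind=|p|$; one-steps are convergent. Stepwise proof terms: one-steps; $\psi_1\cdot\psi_2$ with $tgt(\psi_1)=src(\psi_2)$ ($src=src(\psi_1)$, $tgt=tgt(\psi_2)$, convergent iff $\psi_2$ is, $mind=\min$); $\prod_{i<\omega}\psi_i=\psi_0\cdot(\psi_1\cdot\cdots)$ with all $\psi_i$ convergent and $tgt(\psi_i)=src(\psi_{i+1})$ ($src=src(\psi_0)$, $tgt=\lim_i tgt(\psi_i)$ if it exists, $mind=\min_i mind(\psi_i)$, convergent iff for each $k$, $mind(\psi_j)>k$ for all sufficiently large $j$). Stepwise-or-normal: stepwise, or a rule-free term $t\in\mathrm{Ter}^\infty(\Sigma)$ (then $src=tgt=t$, $mind=\omega$, convergent). Number of steps $|\psi|$ and components $\psi[\alpha]$ ($\alpha<|\psi|$): $|t|=0$; for a one-step $|\psi|=1$, $\psi[0]=\psi$; $|\psi_1\cdot\psi_2|=|\psi_1|+|\psi_2|$, component $\psi_1[\alpha]$ if $\alpha<|\psi_1|$ else $\psi_2[\beta]$ with $|\psi_1|+\beta=\alpha$; $|\prod\psi_i|=\sup_n(|\psi_0|+\dots+|\psi_n|)$, component $\psi_k[\gamma]$ for the unique $k,\gamma$ with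 $\alpha=|\psi_0|+\dots+|\psi_{k-1}|+\gamma$, $\gamma<|\psi_k|$. Denotation. A one-step $\psi$ denotes a step $a=\langle t,p,\mu,\sigma\rangle$ iff $src(\psi)=t$, $tgt(\psi)=tgt(a)$ and $\psi$ has symbol $\mu$ at $p$. $\psi$ denotes $\mathcal{A}$ iff $|\psi|$ equals the length of $\mathcal{A}$, $src(\psi)=src(\mathcal{A})$, and $\psi[\alpha]$ denotes the $\alpha$-th step of $\mathcal{A}$ for all $\alpha$ below the length. *)

From mathcomp Require Import all_boot.

Set Implicit Arguments.
Unset Strict Implicit.
Unset Printing Implicit Defensive.

(* Finite or infinite terms as labelled trees: a term over a symbol set S
   is a map from positions (sequences of child indices; [::] is the root)
   to optional labels (None = not a position of the term).               *)
Definition tm (S : Type) := seq nat -> option S.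

Definition wf_tm (S : Type) (ar : S -> nat) (t : tm S) : Prop :=
  t [::] <> None /\
  forall p i, t (rcons p i) <> None <-> exists s, t p = Some s /\ (i < ar s)%N.

Definition subterm (S : Type) (t : tm S) (p : seq nat) : tm S :=
  fun q => t (p ++ q).

Definition replace (S : Type) (t : tm S) (p : seq nat) (u : tm S) : tm S :=
  fun q => if take (size p) q == p then u (drop (size p) q) else t q.

(* t and u agree at all positions of depth <= k, i.e. d(t,u) < 2^-k *)
Definition agree (S : Type) (k : nat) (t u : tm S) : Prop :=
  forall q, (size q <= k)%N -> t q = u q.

Inductive natinf := Fin of nat | Omega.

Section TRS.
Variables (F : finType) (arF : F -> nat).

(* terms with variables (variables are natural numbers, arity 0) *)
Definition arV (s : F + nat) : nat :=
  match s with inl f => arF f | inr _ => 0 end.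

(* A rule l -> r; rvars is the (duplicate-free) list of the variables of l,
   fixing the order of the arguments of the rule symbol. *)
Record rule := Rule { lhs : tm (F + nat); rhs : tm (F + nat); rvars : seq nat }.

Definition is_var_occ (t : tm (F + nat)) (x : nat) : Prop :=
  exists q, t q = Some (inr x).

Definition rule_ok (mu : rule) : Prop :=
  wf_tm arV (lhs mu) /\ wf_tm arV (rhs mu) /\
  (exists n, forall q, lhs mu q <> None -> (size q <= n)%N) /\
  (exists f, lhs mu [::] = Some (inl f)) /\
  (forall q q' x, lhs mu q = Some (inr x) -> lhs mu q' = Some (inr x) -> q = q') /\
  (forall x, is_var_occ (rhs mu) x -> is_var_occ (lhs mu) x) /\
  uniq (rvars mu) /\ (forall x, x \in rvars mu <-> is_var_occ (lhs mu) x).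

Fixpoint subst_at (r : tm (F + nat)) (sigma : nat -> tm F) (q p : seq nat)
  : option F :=
  match r q with
  | Some (inl f) =>
      match p with
      | [::] => Some f
      | i :: p' => subst_at r sigma (rcons q i) p'
      end
  | Some (inr x) => sigma x p
  | None => None
  end.

Definition subst (r : tm (F + nat)) (sigma : nat -> tm F) : tm F :=
  fun p => subst_at r sigma [::] p.

Variables (Rl : Type) (R : Rl -> rule).

Definition TRS : Prop := forall mu, rule_ok (R mu).

Record step := Step
  { st_src : tm F; st_pos : seq nat; st_rule : Rl; st_sub : nat -> tm F }.

Definition step_valid (a : step) : Prop :=
  wf_tm arF (st_src a) /\ (forall x, wf_tm arF (st_sub a x)) /\
  subterm (st_src a) (st_pos a) = subst (lhs (R (st_rule a))) (st_sub a).

Definition step_tgt (a : step) : tm F :=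
  replace (st_src a) (st_pos a) (subst (rhs (R (st_rule a))) (st_sub a)).

Definition depth (a : step) : nat := size (st_pos a).

(* A reduction sequence: its steps are indexed by a well-ordered type
   rs_I (whose order type is the length beta); rs_start is its source
   (the term t for id_t, and src(a_0) otherwise). *)
Record redseq := RedSeq
  { rs_I : Type; rs_lt : rs_I -> rs_I -> Prop;
    rs_step : rs_I -> step; rs_start : tm F }.

Section RS.
Variable A : redseq.
Let I := rs_I A.
Let lt := @rs_lt A.
Let a := @rs_step A.

Definition strict_wellorder : Prop :=
  (forall x : I, ~ lt x x) /\
  (forall x y z : I, lt x y -> lt y z -> lt x z) /\
  (forall x y : I, x = y \/ lt x y \/ lt y x) /\
  well_founded lt.

Definition is_first (y : I) : Prop := ~ exists x, lt x y.
Definition is_last (y : I) : Prop := ~ exists x, lt y x.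
Definition is_succ (x y : I) : Prop := lt x y /\ ~ exists z, lt x z /\ lt z y.
Definition is_limit (y : I) : Prop := (exists x, lt x y) /\ ~ exists x, is_succ x y.

Definition conv_below (y : I) (u : tm F) : Prop :=
  forall k, exists b, lt b y /\ forall x, lt b x -> lt x y -> agree k (step_tgt (a x)) u.
Definition depth_below (y : I) : Prop :=
  forall n, exists b, lt b y /\ forall x, lt b x -> lt x y -> (n < depth (a x))%N.

Definition conv_top (u : tm F) : Prop :=
  forall k, exists b, forall x, lt b x -> agree k (step_tgt (a x)) u.
Definition depth_top : Prop :=
  forall n, exists b, forall x, lt b x -> (n < depth (a x))%N.

Definition is_redseq : Prop :=
  strict_wellorder /\
  wf_tm arF (rs_start A) /\
  (forall x, step_valid (a x)) /\
  (forall x, is_first x -> st_src (a x) = rs_start A) /\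
  (forall x y, is_succ x y -> st_src (a y) = step_tgt (a x)) /\
  (forall y, is_limit y -> conv_below y (st_src (a y)) /\ depth_below y).

Definition rs_empty : Prop := forall x : I, False.
Definition rs_succ_len : Prop := exists m, is_last m.
Definition rs_limit_len : Prop := (exists x : I, True) /\ ~ rs_succ_len.

Definition seq_conv : Prop :=
  rs_empty \/ rs_succ_len \/
  (rs_limit_len /\ (exists u, conv_top u) /\ depth_top).

Definition seq_tgt (u : tm F) : Prop :=
  seq_conv /\
  ((rs_empty /\ u = rs_start A) \/
   (exists m, is_last m /\ u = step_tgt (a m)) \/
   (rs_limit_len /\ conv_top u)).

Definition seq_mind (m : natinf) : Prop :=
  (rs_empty /\ m = Omega) \/
  (exists n, m = Fin n /\ (exists x, depth (a x) = n) /\ forall x, (n <= depth (a x))%N).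
End RS.

(* Proof terms.  Sigma^R = F + Rl; the rule symbol mu has arity
   size (rvars (R mu)). *)
Definition arR (s : F + Rl) : nat :=
  match s with inl f => arF f | inr mu => size (rvars (R mu)) end.

Definition strip (s : tm (F + Rl)) : tm F :=
  fun q => match s q with Some (inl f) => Some f | _ => None end.

Definition is_onestep (s : tm (F + Rl)) (p : seq nat) : Prop :=
  wf_tm arR s /\ forall q, (exists mu, s q = Some (inr mu)) <-> q = p.

(* the substitution sending the i-th variable of l to the argument t_i *)
Definition os_args (s : tm (F + Rl)) (p : seq nat) (mu : Rl) : nat -> tm F :=
  fun x => strip (subterm s (rcons p (index x (rvars (R mu))))).

Definition os_src (s : tm (F + Rl)) (p : seq nat) : tm F :=
  match s p with
  | Some (inr mu) => replace (strip s) p (subst (lhs (R mu)) (os_args s p mu))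
  | _ => strip s
  end.

Definition os_tgt (s : tm (F + Rl)) (p : seq nat) : tm F :=
  match s p with
  | Some (inr mu) => replace (strip s) p (subst (rhs (R mu)) (os_args s p mu))
  | _ => strip s
  end.

(* Syntax of stepwise proof terms: one-steps, binary composition and
   infinite products prod_i psi_i (= psi_0 . (psi_1 . ...)). *)
Inductive spt :=
  | PStep of tm (F + Rl) & seq nat
  | PComp of spt & spt
  | PProd of (nat -> spt).

Fixpoint pt_src (psi : spt) : tm F :=
  match psi with
  | PStep s p => os_src s p
  | PComp a _ => pt_src a
  | PProd f => pt_src (f 0%N)
  end.

(* pt_tgt psi u : the target of psi exists and is u *)
Fixpoint pt_tgt (psi : spt) (u : tm F) : Prop :=
  match psi with
  | PStep s p => u = os_tgt s p
  | PComp _ b => pt_tgt b u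
  | PProd f => forall k, exists N, forall i, (N <= i)%N ->
                 exists v, pt_tgt (f i) v /\ agree k v u
  end.

Fixpoint pt_mind (psi : spt) (m : nat) : Prop :=
  match psi with
  | PStep _ p => m = size p
  | PComp a b => exists ma mb, pt_mind a ma /\ pt_mind b mb /\ m = minn ma mb
  | PProd f => (exists i, pt_mind (f i) m) /\
               forall i m', pt_mind (f i) m' -> (m <= m')%N
  end.

Fixpoint pt_conv (psi : spt) : Prop :=
  match psi with
  | PStep _ _ => True
  | PComp _ b => pt_conv b
  | PProd f => forall k, exists N, forall j, (N <= j)%N ->
                 forall m, pt_mind (f j) m -> (k < m)%N
  end.

Fixpoint pt_wf (psi : spt) : Prop :=
  match psi with
  | PStep s p => is_onestep s p
  | PComp a b => pt_wf a /\ pt_wf b /\ pt_tgt a (pt_src b)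
  | PProd f => forall i, pt_wf (f i) /\ pt_conv (f i) /\
                         pt_tgt (f i) (pt_src (f i.+1))
  end.

(* Steps psi[alpha]: indexed by Idx psi, ordered by idx_lt; the order type
   of (Idx psi, idx_lt) is |psi| (ordinal sum for composition, sup of the
   partial sums = lexicographic sum over nat for products). *)
Fixpoint Idx (psi : spt) : Type :=
  match psi with
  | PStep _ _ => unit
  | PComp a b => (Idx a + Idx b)%type
  | PProd f => {n : nat & Idx (f n)}
  end.

Fixpoint idx_lt (psi : spt) : Idx psi -> Idx psi -> Prop :=
  match psi return Idx psi -> Idx psi -> Prop with
  | PStep _ _ => fun _ _ => False
  | PComp a b => fun x y =>
      match x, y with
      | inl x', inl y' => idx_lt x' y'
      | inl _, inr _ => True
      | inr _, inl _ => False
      | inr x', inr y' => idx_lt x' y'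
      end
  | PProd f => fun x y =>
      (projT1 x < projT1 y)%N \/
      exists e : projT1 x = projT1 y,
        idx_lt (eq_rect _ (fun n => Idx (f n)) (projT2 x) _ e) (projT2 y)
  end.

Fixpoint component (psi : spt) : Idx psi -> (tm (F + Rl) * seq nat) :=
  match psi return Idx psi -> (tm (F + Rl) * seq nat) with
  | PStep s p => fun _ => (s, p)
  | PComp a b => fun x => match x with inl x' => component x' | inr y' => component y' end
  | PProd f => fun x => component (projT2 x)
  end.

Inductive sorn :=
  | SStep of spt
  | SNorm of tm F.

Definition sorn_wf (psi : sorn) : Prop :=
  match psi with SStep p => pt_wf p | SNorm t => wf_tm arF t end.

Definition sorn_src (psi : sorn) : tm F :=
  match psi with SStep p => pt_src p | SNorm t => t end.

Definition sorn_tgt (psi : sorn) (u : tm F) : Prop :=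
  match psi with SStep p => pt_tgt p u | SNorm t => u = t end.

Definition sorn_mind (psi : sorn) (m : natinf) : Prop :=
  match psi with
  | SStep p => exists n, m = Fin n /\ pt_mind p n
  | SNorm _ => m = Omega
  end.

Definition sorn_conv (psi : sorn) : Prop :=
  match psi with SStep p => pt_conv p | SNorm _ => True end.

Definition sIdx (psi : sorn) : Type :=
  match psi with SStep p => Idx p | SNorm _ => Empty_set end.

Definition sidx_lt (psi : sorn) : sIdx psi -> sIdx psi -> Prop :=
  match psi return sIdx psi -> sIdx psi -> Prop with
  | SStep p => @idx_lt p
  | SNorm _ => fun _ _ => False
  end.

Definition scomponent (psi : sorn) : sIdx psi -> (tm (F + Rl) * seq nat) :=
  match psi return sIdx psi -> (tm (F + Rl) * seq nat) with
  | SStep p => @component p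
  | SNorm _ => fun x => match x with end
  end.

Definition os_denotes (sp : tm (F + Rl) * seq nat) (a : step) : Prop :=
  os_src sp.1 sp.2 = st_src a /\ os_tgt sp.1 sp.2 = step_tgt a /\
  sp.1 (st_pos a) = Some (inr (st_rule a)).

(* psi denotes A: |psi| = length of A (order isomorphism of the index
   well-orders), same source, and psi[alpha] denotes the alpha-th step. *)
Definition denotes (psi : sorn) (A : redseq) : Prop :=
  exists f : sIdx psi -> rs_I A,
    bijective f /\
    (forall x y, sidx_lt x y <-> @rs_lt A (f x) (f y)) /\
    sorn_src psi = rs_start A /\
    forall x, os_denotes (scomponent x) (@rs_step A (f x)).

End TRS.

(* Denotation identifies the steps of psi, ordered as in the proof term, with
   the steps of A, and the depth of each step with the position of the rule
   symbol in the corresponding one-step; so both minimal depths are minima of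
   the same numbers.  Convergence and target of a stepwise proof term are those
   of its last factor, whose steps form a final segment of A: a one-step is
   the last step of A, while an infinite product converges iff the depths of its
   factors tend to infinity, and then its target is the limit of their sources.
   Since a step deeper than k does not change a term up to depth k, transfinite
   induction along A shows that beyond the point where all steps are deeper than
   k, all sources and targets agree up to depth k; hence the sources of the
   factors and the targets of the steps of A have the same limit. *)

From mathcomp Require Import all_boot zify.
From Stdlib Require Import Classical ClassicalEpsilon FunctionalExtensionality.

Set Implicit Arguments.
Unset Strict Implicit.
Unset Printing Implicit Defensive.

Definition is_min_of (T : Type) (h : T -> nat) (m : nat) : Prop :=
  (exists x, h x = m) /\ forall x, (m <= h x)%N.

Lemma is_min_of_exists (T : Type) (h : T -> nat) (x : T) : exists m, is_min_of h m.
Proof.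
move: x; apply: (well_founded_ind (Wf_nat.well_founded_ltof T h)) => x IH.
case: (classic (exists y, h y < h x)) => [[y /ltP/IH //]|Hmin].
exists (h x); split; first by exists x.
by move=> y; rewrite leqNgt; apply/negP => Hy; apply: Hmin; exists y.
Qed.

Lemma is_min_of_unique (T : Type) (h : T -> nat) m m' :
  is_min_of h m -> is_min_of h m' -> m = m'.
Proof.
by move=> [[x <-] Hm] [[x' <-] Hm']; apply/eqP; rewrite eqn_leq Hm Hm'.
Qed.

Lemma is_min_of_transfer (S T : Type) (f : S -> T) (g : T -> S)
    (h1 : S -> nat) (h2 : T -> nat) m :
  (forall x, h1 x = h2 (f x)) -> cancel g f ->
  is_min_of h1 m <-> is_min_of h2 m.
Proof.
move=> Eh gK; split=> [[[x <-] Hm]|[[y <-] Hm]]; split.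
- by exists (f x); rewrite Eh.
- by move=> y; rewrite -(gK y) -Eh.
- by exists (g y); rewrite Eh gK.
- by move=> x; rewrite Eh.
Qed.

Lemma is_min_of_sum (S T : Type) (h : S + T -> nat) ma mb :
  is_min_of (h \o inl) ma -> is_min_of (h \o inr) mb -> is_min_of h (minn ma mb).
Proof.
move=> [[x Ex] Ha] [[y Ey] Hb]; split.
- by case: (leqP ma mb) => Hab; [exists (inl x)|exists (inr y)]; rewrite /= in Ex Ey; lia.
- by case=> z; [have := Ha z|have := Hb z]; rewrite /=; lia.
Qed.

Lemma is_min_of_sigma (I : Type) (T : I -> Type) (h : {i : I & T i} -> nat) m :
  (forall i, T i) ->
  is_min_of h m <->
  (exists i, is_min_of (fun y => h (existT _ i y)) m) /\
  (forall i m', is_min_of (fun y => h (existT _ i y)) m' -> (m <= m')%N).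
Proof.
move=> inhT; split.
- move=> [[[i x] Ex] Hm]; split.
    by exists i; split=> [|y]; [exists x|apply: Hm].
  by move=> j m' [[y <-] _]; apply: Hm.
- move=> [[i [[x Ex] _]] Hm]; split; first by exists (existT _ i x).
  move=> [j y]; have [mj Hmj] := is_min_of_exists (fun z => h (existT _ j z)) (inhT j).
  by apply: leq_trans (Hm _ _ Hmj) _; case: Hmj => _; apply.
Qed.

Lemma agree_sym (S : Type) k (t u : tm S) : agree k t u -> agree k u t.
Proof. by move=> H q Hq; rewrite H. Qed.

Lemma agree_trans (S : Type) k (t u v : tm S) :
  agree k t u -> agree k u v -> agree k t v.
Proof. by move=> H1 H2 q Hq; rewrite H1 // H2. Qed.

Lemma agree_eq (S : Type) (t u : tm S) : (forall k, agree k t u) -> t = u.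
Proof. by move=> H; apply: functional_extensionality => q; apply: (H (size q)). Qed.

Section ProofTerms.
Variables (F : finType) (arF : F -> nat) (Rl : Type) (R : Rl -> rule F).

Fixpoint idx_first (p : spt F Rl) : Idx p :=
  match p return Idx p with
  | PStep _ _ => tt
  | PComp a _ => inl (idx_first a)
  | PProd f => existT _ 0 (idx_first (f 0))
  end.

Lemma pt_src_idx_first (p : spt F Rl) :
  pt_src R p = os_src R (component (idx_first p)).1 (component (idx_first p)).2.
Proof. by elim: p => //=. Qed.

Definition comp_depth (p : spt F Rl) (x : Idx p) : nat := size (component x).2.

Lemma pt_mind_min (p : spt F Rl) m : pt_mind p m <-> is_min_of (@comp_depth p) m.
Proof.
elim: p m => [s q|a IHa b IHb|f IH] m /=.
- by split=> [->|[[_ <-] //]]; split=> //; exists tt.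
- split=> [[ma [mb [/IHa Ha [/IHb Hb ->]]]]|Hm]; first exact: is_min_of_sum.
  have [ma Ha] := is_min_of_exists (@comp_depth a) (idx_first a).
  have [mb Hb] := is_min_of_exists (@comp_depth b) (idx_first b).
  exists ma, mb; split; [exact/IHa|split; first exact/IHb].
  exact: is_min_of_unique Hm (is_min_of_sum Ha Hb).
- rewrite (is_min_of_sigma _ _ (fun i => idx_first (f i))).
  split=> -[[i Hi] Hm]; split; try by exists i; apply/IH.
  + by move=> j m' Hj; apply: (Hm j); apply/(IH j m').
  + by move=> j m' /IH; apply: Hm.
Qed.

Lemma pt_wf_component (p : spt F Rl) :
  pt_wf arF R p -> forall x : Idx p, is_onestep arF R (component x).1 (component x).2.
Proof.
elim: p => [s q|a IHa b IHb|f IH] /=.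
- by move=> H _.
- by case=> [Ha [Hb _]] [x|x]; [apply: IHa|apply: IHb].
- by move=> H [i x] /=; apply: IH; case: (H i).
Qed.

Lemma pt_tgt_unique (p : spt F Rl) u v : pt_tgt R p u -> pt_tgt R p v -> u = v.
Proof.
elim: p u v => [s q|a _ b IHb|f IH] u v /=; [by move=> -> ->|exact: IHb|].
move=> Hu Hv; apply: agree_eq => k.
have [N1 H1] := Hu k; have [N2 H2] := Hv k.
have [u' [Tu Au]] := H1 (maxn N1 N2) (leq_maxl _ _).
have [v' [Tv Av]] := H2 (maxn N1 N2) (leq_maxr _ _).
by rewrite -(IH _ _ _ Tu Tv) in Av; apply: agree_trans (agree_sym Au) Av.
Qed.

End ProofTerms.

Lemma agree_step_tgt_src (F : finType) (Rl : Type) (R : Rl -> rule F)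
    (s : step F Rl) k :
  (k < depth s)%N -> agree k (step_tgt R s) (st_src s).
Proof.
move=> Hk q Hq; rewrite /step_tgt /replace; case: eqP => // E.
have : size (take (size (st_pos s)) q) = size (st_pos s) by rewrite E.
rewrite size_take; move: Hk Hq; rewrite /depth.
by case: (ltnP (size (st_pos s)) (size q)); lia.
Qed.

Section ReductionSequence.
Variables (F : finType) (arF : F -> nat) (Rl : Type) (R : Rl -> rule F).
Variable A : redseq F Rl.
Hypothesis HA : is_redseq arF R A.

Local Notation I := (rs_I A).
Local Notation lt := (@rs_lt _ _ A).
Local Notation le x y := (x = y \/ lt x y).
Local Notation a := (@rs_step _ _ A).
Local Notation tgt x := (step_tgt R (a x)).
Local Notation src x := (st_src (a x)).

Definition deep_above (k : nat) (c : I) : Prop :=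
  forall x, lt c x -> (k < depth (a x))%N.

Lemma lt_irrefl (x : I) : ~ lt x x.
Proof. by case: HA => [[H _] _]. Qed.

Lemma lt_trans (x y z : I) : lt x y -> lt y z -> lt x z.
Proof. by case: HA => [[_ [H _]] _]; apply: H. Qed.

Lemma lt_total (x y : I) : x = y \/ lt x y \/ lt y x.
Proof. by case: HA => [[_ [_ [H _]]] _]. Qed.

Lemma lt_wf : well_founded lt.
Proof. by case: HA => [[_ [_ [_ H]]] _]. Qed.

Lemma src_succ (x y : I) : is_succ x y -> src y = tgt x.
Proof. by case: HA => [_ [_ [_ [_ [H _]]]]]; apply: H. Qed.

Lemma src_limit (y : I) : is_limit y -> conv_below R y (src y).
Proof. by case: HA => [_ [_ [_ [_ [_ H]]]]] /H []. Qed.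

Lemma succ_or_limit (x y : I) : lt x y ->
  (exists z, is_succ z y) \/
  (is_limit y /\ forall c, lt c y -> exists w, lt c w /\ lt w y).
Proof.
move=> Hxy; case: (classic (exists z, is_succ z y)) => Hsucc; [by left|right].
split; first by split; [exists x|].
move=> c Hc; apply: NNPP => Hn; apply: Hsucc; exists c.
by split=> // -[w Hw]; apply: Hn; exists w.
Qed.

Lemma tgt_approx_src (c y : I) k :
  lt c y -> exists w, le c w /\ lt w y /\ agree k (tgt w) (src y).
Proof.
move=> Hcy; case: (succ_or_limit Hcy) => [[z Hz]|[Hlim Hdense]].
- exists z; split; last by split; [case: Hz|rewrite (src_succ Hz)].
  case: Hz => Hzy Hnot; case: (lt_total c z) => [->|[]]; [by left|by right|].
  by move=> Hzc; case: Hnot; exists c.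
- have [b [Hby Hb]] := src_limit Hlim k.
  have [m [Hcm [Hbm Hmy]]] : exists m, le c m /\ le b m /\ lt m y.
    case: (lt_total c b) => [<-|[Hcb|Hbc]]; first by exists c; auto.
      by exists b; auto.
    by exists c; auto.
  have [w [Hmw Hwy]] := Hdense m Hmy.
  have lt_w z : le z m -> lt z w by case=> [->//|/lt_trans]; apply.
  exists w; split; first by right; exact: lt_w Hcm.
  by split=> //; apply: Hb => //; exact: lt_w Hbm.
Qed.

Lemma deep_tgt_agree_src (c : I) k : deep_above k c ->
  forall y x, lt c x -> lt x y -> agree k (tgt x) (src y).
Proof.
move=> Hdeep y; elim: (lt_wf y) => {}y _ IH x Hcx Hxy.
have [w [Hxw [Hwy Hw]]] := tgt_approx_src k Hxy.
case: Hxw => [-> //|Hxw].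
apply: agree_trans (IH w Hwy x Hcx Hxw) _; apply: agree_trans Hw.
exact/agree_sym/agree_step_tgt_src/Hdeep/(lt_trans Hcx).
Qed.

Lemma deep_tgt_agree (c1 c2 : I) k : deep_above k c1 -> deep_above k c2 ->
  forall x y, lt c1 x -> lt c2 y -> agree k (tgt x) (tgt y).
Proof.
have agree_above c : deep_above k c ->
    forall x y, lt c x -> lt c y -> agree k (tgt x) (tgt y).
  move=> Hc x y Hx Hy; case: (lt_total x y) => [->//|[Hxy|Hyx]].
  - apply: agree_trans (deep_tgt_agree_src Hc Hx Hxy) _.
    exact/agree_sym/agree_step_tgt_src/Hc.
  - apply: agree_sym; apply: agree_trans (deep_tgt_agree_src Hc Hy Hyx) _.
    exact/agree_sym/agree_step_tgt_src/Hc.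
move=> H1 H2 x y Hx Hy; case: (lt_total c1 c2) => [E|[E|E]].
- by subst c2; apply: agree_above H1 x y Hx Hy.
- exact: agree_above H1 x y Hx (lt_trans E Hy).
- exact: agree_above H2 x y (lt_trans E Hx) Hy.
Qed.

(* The limit is read off at each position q from a step lying beyond the
   point after which all steps are deeper than q. *)
Lemma conv_top_exists :
  depth_top A -> (forall b : I, exists x, lt b x) -> exists u, conv_top R A u.
Proof.
move=> Hdeep Hnolast.
have [b Hb] := choice (fun k => deep_above k) Hdeep.
have [x Hx] := choice (fun k x => lt (b k) x) (fun k => Hnolast (b k)).
exists (fun q => tgt (x (size q)) q) => k; exists (b k) => y Hy q Hq.
have Hbk : deep_above (size q) (b k) by move=> z /Hb; apply: leq_ltn_trans.
by rewrite (deep_tgt_agree (Hb (size q)) Hbk (Hx (size q)) Hy).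
Qed.

Lemma seq_conv_iff_depth_top (x0 : I) : seq_conv R A <-> depth_top A.
Proof.
split=> [[|[[m Hm]|[_ [_ //]]]]|Hdeep].
- by move/(_ x0).
- by rewrite /depth_top /= => n; exists m => x Hx; case: Hm; exists x.
case: (classic (exists m, @is_last _ _ A m)) => Hlast; first by right; left.
right; right; split; first by split; [exists x0|].
split=> //; apply: conv_top_exists => // c.
by apply: NNPP => Hn; apply: Hlast; exists c => -[x Hx]; apply: Hn; exists x.
Qed.

Definition steps_tgt (u : tm F) : Prop :=
  (exists m, is_last m /\ u = tgt m) \/ (rs_limit_len A /\ conv_top R A u).

Lemma seq_tgt_nonempty (x0 : I) u : seq_tgt R A u <-> seq_conv R A /\ steps_tgt u.
Proof.
split=> [[Hc [[/(_ x0) []]|H]]|[Hc H]]; first by split.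
by split; last right.
Qed.

Lemma steps_tgt_no_last (x0 : I) u :
  (forall b, exists x, lt b x) -> steps_tgt u <-> conv_top R A u.
Proof.
have no_last : (forall b, exists x, lt b x) -> forall m : I, ~ is_last m.
  by move=> Hnl m Hm; have [x Hx] := Hnl m; apply: Hm; exists x.
move=> Hnl; split=> [[[m [/(no_last Hnl) //]]|[_ //]]|Hu].
right; split=> //; split; first by exists x0.
by case=> m /(no_last Hnl).
Qed.

(* [e] identifies the steps of a proof term with a final segment of [A]. *)
Definition final_embedding (p : spt F Rl) (e : Idx p -> I) : Prop :=
  [/\ forall x y, idx_lt x y <-> lt (e x) (e y),
      forall x z, lt (e x) z -> exists y, z = e y &
      forall x, os_denotes R (component x) (a (e x))].

Lemma depth_denoted (p : spt F Rl) (e : Idx p -> I) :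
  pt_wf arF R p -> (forall x, os_denotes R (component x) (a (e x))) ->
  forall x, depth (a (e x)) = comp_depth x.
Proof.
move=> Hwf Hden x; have [_ Hos] := pt_wf_component Hwf x.
have [_ [_ Hsym]] := Hden x.
by rewrite /depth /comp_depth -((Hos (st_pos (a (e x)))).1 (ex_intro _ _ Hsym)).
Qed.

Lemma final_embedding_step s q (e : Idx (PStep s q) -> I) :
  final_embedding e -> depth_top A /\ forall u, u = os_tgt R s q <-> steps_tgt u.
Proof.
case=> _ Hfin Hden.
have Hlast : is_last (e tt).
  by case=> z Hz; have [[] E] := Hfin _ _ Hz; subst z; apply: lt_irrefl Hz.
split=> [|u].
  by rewrite /depth_top /= => n; exists (e tt) => x Hx; case: Hlast; exists x.
have [_ [/= -> _]] := Hden tt; split=> [->|[[m [Hm ->]]|[[_ Hns] _]]].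
- by left; exists (e tt).
- case: (lt_total m (e tt)) => [->//|[H|H]]; first by case: Hm; exists (e tt).
  by case: Hlast; exists m.
- by case: Hns; exists (e tt).
Qed.

Section Product.
Variables (g : nat -> spt F Rl) (e : Idx (PProd g) -> I).
Hypotheses (Hwf : pt_wf arF R (PProd g)) (He : final_embedding e).

Let blk i : Idx (PProd g) := existT _ i (idx_first (g i)).

Lemma prod_lt_block i j (y : Idx (g i)) (z : Idx (g j)) :
  (i < j)%N -> lt (e (existT _ i y)) (e (existT _ j z)).
Proof. by case: He => Hord _ _ Hij; apply/Hord; left. Qed.

Lemma prod_eventually_above (b : I) :
  exists N, forall i y, (N <= i)%N -> lt b (e (existT _ i y)).
Proof.
case: He => _ Hfin _.
have [y0 Hy0] : exists y0, le b (e y0).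
  case: (lt_total b (e (blk 0))) => [->|[H|/Hfin [y ->]]].
  - by exists (blk 0); left.
  - by exists (blk 0); right.
  - by exists y; left.
exists (projT1 y0).+1 => i y Hi; case: y0 Hy0 Hi => j y0 /= Hb Hi.
have Hlt := prod_lt_block y0 y Hi.
by case: Hb => [->//|Hb]; apply: lt_trans Hb Hlt.
Qed.

Lemma prod_above_block N (z : I) :
  lt (e (blk N)) z -> exists i (y : Idx (g i)), (N <= i)%N /\ z = e (existT _ i y).
Proof.
case: He => Hord Hfin _ Hz; have [[i y] Ez] := Hfin _ _ Hz; subst z.
exists i, y; split=> //.
by case: ((Hord (blk N) (existT _ i y)).2 Hz) => [/ltnW|[/= E _]]; rewrite ?E.
Qed.

Lemma prod_no_last (b : I) : exists x, lt b x.
Proof. by have [N HN] := prod_eventually_above b; exists (e (blk N)); apply: HN. Qed.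

Lemma prod_src_block i : src (e (blk i)) = pt_src R (g i).
Proof.
by case: He => _ _ Hden; have [<- _] := Hden (blk i); rewrite pt_src_idx_first.
Qed.

Lemma prod_tgt_component i v : pt_tgt R (g i) v <-> v = pt_src R (g i.+1).
Proof.
have [_ [_ Htgt]] := Hwf i.
by split=> [Hv|->//]; apply: pt_tgt_unique Hv Htgt.
Qed.

Lemma prod_conv_iff : pt_conv (PProd g) <-> depth_top A.
Proof.
case: He => _ _ Hden; have Hdepth := depth_denoted Hwf Hden.
rewrite /depth_top /=; split=> [Hconv n|Hdeep k].
- have [N HN] := Hconv n; exists (e (blk N)) => z /prod_above_block [i [y [Hi ->]]].
  have [m Hm] := is_min_of_exists (@comp_depth _ _ (g i)) y.
  rewrite Hdepth; apply: leq_trans (HN i Hi m _) _; first exact/pt_mind_min.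
  by case: Hm => _; apply.
- have [b Hb] := Hdeep k; have [N HN] := prod_eventually_above b.
  exists N => j Hj m /pt_mind_min [[y <-] _].
  by have := Hb _ (HN j y Hj); rewrite Hdepth; apply.
Qed.

Lemma prod_tgt_iff u :
  pt_conv (PProd g) -> pt_tgt R (PProd g) u <-> conv_top R A u.
Proof.
move=> /prod_conv_iff Hdeep; rewrite /conv_top /=; split=> [Htgt k|Hu k].
- have [N HN] := Htgt k; have [b Hb] := Hdeep k.
  have [N' HN'] := prod_eventually_above b.
  exists (e (blk (maxn N N'))) => _ /prod_above_block [i [y [Hi ->]]].
  have [v [/prod_tgt_component -> Hv]] := HN i (leq_trans (leq_maxl _ _) Hi).
  apply: agree_trans Hv; rewrite -prod_src_block.
  apply: (deep_tgt_agree_src Hb); last exact: prod_lt_block.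
  exact/HN'/(leq_trans (leq_maxr _ _) Hi).
- have [b Hb] := Hu k; have [N HN] := prod_eventually_above b.
  exists N => i Hi; exists (pt_src R (g i.+1)); split; first exact/prod_tgt_component.
  have Hlt : lt (e (blk N)) (e (blk i.+1)) by apply: prod_lt_block.
  have [w [Hw [_ Hwsrc]]] := tgt_approx_src k Hlt.
  rewrite prod_src_block in Hwsrc; apply: agree_trans (agree_sym Hwsrc) (Hb w _).
  by case: Hw => [<-|]; [|apply: lt_trans]; apply: HN.
Qed.

End Product.

Lemma final_embedding_compr (p1 p2 : spt F Rl) (e : Idx (PComp p1 p2) -> I) :
  final_embedding e -> final_embedding (fun x => e (inr x)).
Proof.
case=> Hord Hfin Hden; split=> [x y|x z Hz|x]; last exact: Hden (inr x).
- exact: Hord (inr x) (inr y).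
- have [[y|y] Ez] := Hfin _ _ Hz; last by exists y.
  by subst z; have := (Hord (inr x) (inl y)).2 Hz.
Qed.

(* Only the last factor of a composition matters, so the induction runs over
   embeddings onto final segments of [A]. *)
Lemma final_embedding_tail (p : spt F Rl) (e : Idx p -> I) :
  pt_wf arF R p -> final_embedding e ->
  (pt_conv p <-> depth_top A) /\
  (pt_conv p -> forall u, pt_tgt R p u <-> steps_tgt u).
Proof.
elim: p e => [s q|p1 _ p2 IH|g _] e Hwf He.
- by have [Hdeep Htgt] := final_embedding_step He.
- by case: Hwf => _ [Hwf2 _]; apply: IH Hwf2 (final_embedding_compr He).
- split=> [|Hconv u]; first exact: prod_conv_iff Hwf He.
  have x0 := e (existT _ 0 (idx_first (g 0))).
  by rewrite (prod_tgt_iff Hwf He) // (steps_tgt_no_last x0 u (prod_no_last He)).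
Qed.

Lemma seq_mind_nonempty (x0 : I) m :
  seq_mind A m <-> exists n, m = Fin n /\ is_min_of (fun x => depth (a x)) n.
Proof. by split=> [[[/(_ x0) []]|//]|Hm]; right. Qed.

Lemma stepwise_denotation (p : spt F Rl) :
  pt_wf arF R p -> denotes R (SStep p) A ->
  [/\ forall m, sorn_mind (SStep p) m <-> seq_mind A m,
      pt_conv p <-> seq_conv R A &
      seq_conv R A -> forall u, pt_tgt R p u <-> seq_tgt R A u].
Proof.
move=> Hwf [f [[g _ gK] [Hord [_ Hden]]]].
have He : final_embedding f by split=> // x z _; exists (g z); rewrite gK.
have [Hconv Htgt] := final_embedding_tail Hwf He.
have Hmind n : pt_mind p n <-> is_min_of (fun x => depth (a x)) n.
  by rewrite pt_mind_min; apply: is_min_of_transfer gK => x; rewrite depth_denoted.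
have x0 := f (idx_first p).
split=> [m||Hc u].
- by rewrite (seq_mind_nonempty x0); split=> -[n [-> /Hmind Hn]]; exists n.
- exact: iff_trans Hconv (iff_sym (seq_conv_iff_depth_top x0)).
- rewrite (seq_tgt_nonempty x0); apply: iff_trans (Htgt _ u) _.
    exact/Hconv/(seq_conv_iff_depth_top x0).
  by split=> [|[]].
Qed.

Lemma normal_denotation (t : tm F) : denotes R (@SNorm F Rl t) A ->
  [/\ forall m, m = Omega <-> seq_mind A m, seq_conv R A &
      forall u, u = t <-> seq_tgt R A u].
Proof.
move=> [f [[g _ _] [_ [/= Hsrc _]]]].
have Hempty : rs_empty A by move=> x; case: (g x).
split=> [m||u]; [|by left|].
- by split=> [->|[[_ ->]//|[n [_ [[x _] _]]]]]; [left|case: (g x)].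
- split=> [->|[_ [[_ ->]//|[[m _]|[[[x _] _] _]]]]].
  + by split; left.
  + by case: (g m).
  + by case: (g x).
Qed.

End ReductionSequence.

Theorem mainTheorem4 (F : finType) (arF : F -> nat) (Rl : Type)
  (R : Rl -> rule F) (HT : TRS arF R)
  (A : redseq F Rl) (HA : is_redseq arF R A)
  (psi : sorn F Rl) (Hpsi : sorn_wf arF R psi) (Hden : denotes R psi A) :
  (forall m, sorn_mind psi m <-> seq_mind A m) /\
  (sorn_conv psi <-> seq_conv R A) /\
  (seq_conv R A -> forall u, sorn_tgt R psi u <-> seq_tgt R A u).
Proof.
case: psi Hpsi Hden => [p|t] Hwf Hden.
- by have [Hmind Hconv Htgt] := stepwise_denotation HA Hwf Hden.
- by have [Hmind Hconv Htgt] := normal_denotation Hden.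
Qed.
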